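(* Let $K$ be a field of characteristic zero. Suppose $F,G,H,E,\tilde E\in K[X]\setminus K$ and degree-one polynomials $a,b,c,\tilde a,\tilde b,\tilde c\in K[X]$ satisfy $F=E\circ H\circ a$, $G=E\circ c\circ H\circ b$, $F^t=\tilde E\circ H\circ\tilde a$, and $G^t=\tilde E\circ\tilde c\circ H\circ\tilde b$ for some integer $t>1$. Then there is a degree-one $e\in K[X]$ such that $F^{t-1}=G^{t-1}\circ e$.
   Context: $F^t$ denotes the $t$-th iterate of $F$ under composition $\circ$. *)

From mathcomp Require Import all_boot all_algebra.
Set Implicit Arguments. Unset Strict Implicit. Unset Printing Implicit Defensive.
Import GRing.Theory.
Local Open Scope ring_scope.

Definition poly_iter (K : fieldType) (F : {poly K}) (t : nat) : {poly K} :=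
  iter t (fun q => F \Po q) 'X.

From mathcomp Require Import all_boot all_algebra.
From mathcomp Require Import ring zify.
Import GRing.Theory.
Set Implicit Arguments.
Unset Strict Implicit.
Unset Printing Implicit Defensive.
Local Open Scope ring_scope.

(* If A \Po B = C \Po D with size B = size D, then after rescaling D to give B
   and D the same leading coefficient, A and C share their leading term
   l 'X^n, so l (B^n - D^n) has degree at most (n-1) m, where m = deg B.  As
   B^n - D^n = (B - D) \sum_i B^(n-1-i) D^i and in characteristic zero the sum
   has degree exactly (n-1) m (its top coefficient is n lead(B)^(n-1)), B - D
   is constant, i.e. B is a linear polynomial composed with D.
   For the theorem, F^t = F^(t-1) \Po E \Po H \Po a = Et \Po H \Po at_ gives
   Et = F^(t-1) \Po E \Po l1; the decomposition of G^t then gives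
   G^(t-1) \Po E \Po c = Et \Po ct \Po l2 = F^(t-1) \Po (E \Po l1 \Po ct \Po l2),
   and a third application, to right factors of degree deg E, gives
   F^(t-1) = G^(t-1) \Po e. *)

Section CompPoly.
Variable R : idomainType.
Implicit Types p q A B C D : {poly R}.

Lemma size_comp_poly_gt1 p q :
  (1 < size p)%N -> (1 < size q)%N -> (1 < size (p \Po q))%N.
Proof.
move=> sp sq; have : (0 < (size (p \Po q)).-1)%N.
  by rewrite size_comp_poly muln_gt0; apply/andP; lia.
lia.
Qed.

Lemma comp_poly_inj q : (1 < size q)%N -> injective (comp_poly q).
Proof.
move=> sq p1 p2 /eqP; rewrite -subr_eq0 -comp_polyB comp_poly_eq0 // subr_eq0.
by move/eqP.
Qed.

Lemma size_sub_lead_Xn p :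
  (size (p - lead_coef p *: 'X^((size p).-1))%R <= (size p).-1)%N.
Proof.
apply/leq_sizeP => j hj; rewrite coefB coefZ coefXn.
have [->|ltj] := eqVneq j (size p).-1; first by rewrite mulr1 subrr.
by rewrite mulr0 subr0 nth_default // (leq_trans (leqSpred _)) // ltn_neqAle eq_sym ltj.
Qed.

Lemma size_lead_pow_mul B D k i : B != 0 -> size B = size D ->
  lead_coef B = lead_coef D ->
  size (B ^+ k * D ^+ i) = ((size B).-1 * (k + i)).+1 /\
  lead_coef (B ^+ k * D ^+ i) = lead_coef B ^+ (k + i).
Proof.
move=> B0 sBD lBD; have D0 : D != 0 by rewrite -size_poly_gt0 -sBD size_poly_gt0.
rewrite lead_coefM !lead_coef_exp -lBD -exprD; split=> //.
rewrite size_mul ?expf_neq0 // (polySpred (expf_neq0 k B0)).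
rewrite (polySpred (expf_neq0 i D0)) !size_exp -sBD mulnDr.
by rewrite addSn addnS.
Qed.

Hypothesis charR0 : [pchar R] =i pred0.

Lemma size_sum_pow_mul B D n : B != 0 -> size B = size D ->
  lead_coef B = lead_coef D -> (0 < n)%N ->
  size (\sum_(i < n) B ^+ (n.-1 - i) * D ^+ i) = ((size B).-1 * n.-1).+1.
Proof.
move=> B0 sBD lBD n0; set N := ((size B).-1 * n.-1)%N.
have term i : (i < n)%N -> size (B ^+ (n.-1 - i) * D ^+ i) = N.+1 /\
    lead_coef (B ^+ (n.-1 - i) * D ^+ i) = lead_coef B ^+ n.-1.
  move=> lt_in; have [-> ->] := size_lead_pow_mul (n.-1 - i) i B0 sBD lBD.
  by rewrite subnK //; lia.
have coefN : (\sum_(i < n) B ^+ (n.-1 - i) * D ^+ i)`_N = n%:R * lead_coef B ^+ n.-1.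
  rewrite coef_sum (eq_bigr (fun _ => lead_coef B ^+ n.-1)) ?sumr_const ?card_ord.
    by rewrite mulr_natl.
  by move=> i _; have [s l] := term i (ltn_ord i); rewrite -l lead_coefE s.
apply/eqP; rewrite eqn_leq; apply/andP; split.
  apply/leq_sizeP => j hj; rewrite coef_sum big1 // => i _.
  by rewrite nth_default // (term i (ltn_ord i)).1.
rewrite ltnNge; apply/negP => /leq_sizeP /(_ N (leqnn N)) /eqP.
rewrite coefN mulf_eq0 expf_eq0 lead_coef_eq0 (negbTE B0) andbF orbF.
by rewrite ((pcharf0P R).1 charR0); lia.
Qed.

Lemma size_sub_le1_comp_eq A B C D :
  (1 < size A)%N -> (1 < size B)%N -> size B = size D ->
  lead_coef B = lead_coef D -> A \Po B = C \Po D -> (size (B - D)%R <= 1)%N.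
Proof.
move=> sA sB sBD lBD eABCD.
set m := (size B).-1; set n := (size A).-1; set N := (m * n.-1)%N.
have B0 : B != 0 by rewrite -size_poly_gt0; lia.
have lB0 : lead_coef B != 0 by rewrite lead_coef_eq0.
have A0 : A != 0 by rewrite -size_poly_gt0; lia.
have sC : size C = size A.
  have := size_comp_poly C D; rewrite -eABCD size_comp_poly -sBD -/m -/n.
  move/eqP; rewrite eqn_pmul2r; last by rewrite /m; lia.
  by move/eqP; rewrite /n; lia.
have lC : lead_coef C = lead_coef A.
  have sD : (1 < size D)%N by rewrite -sBD.
  have := lead_coef_comp C sD; rewrite -eABCD lead_coef_comp // sC -lBD.
  by move=> /esym /(mulIf (expf_neq0 _ lB0)).
have sA0 : (size (A - lead_coef A *: 'X^n)%R <= n)%N by exact: size_sub_lead_Xn.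
have sC0 : (size (C - lead_coef A *: 'X^n)%R <= n)%N.
  by rewrite /n -sC -lC size_sub_lead_Xn.
set l := lead_coef A.
have diff :
    l *: (B ^+ n - D ^+ n) = ((C - l *: 'X^n) \Po D) - ((A - l *: 'X^n) \Po B).
  by rewrite !comp_polyB !comp_polyZ !comp_Xn_poly eABCD scalerBr; ring.
have size_diff : (size (l *: (B ^+ n - D ^+ n)) <= N.+1)%N.
  have size_comp_le (P Q : {poly R}) : (size P <= n)%N -> (size Q).-1 = m ->
      (size (P \Po Q) <= N.+1)%N.
    move=> sP sQ; apply: leq_trans (size_comp_poly_leq P Q) _.
    by rewrite sQ ltnS /N mulnC leq_mul2l -!subn1 leq_sub2r ?orbT.
  rewrite diff (leq_trans (size_polyD _ _)) // size_polyN geq_max.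
  by rewrite !size_comp_le // /m sBD.
have n_gt0 : (0 < n)%N by rewrite /n; lia.
have sS := size_sum_pow_mul B0 sBD lBD n_gt0.
move: size_diff; rewrite size_scale ?lead_coef_eq0 ?A0 // subrXX.
have [->|BD0] := eqVneq (B - D) 0; first by rewrite size_poly0.
by rewrite size_mul // -?size_poly_gt0 sS // addnS /= -addn1 addnC leq_add2l.
Qed.
End CompPoly.


Section LinearRightFactor.
Variable K : fieldType.
Hypothesis charK0 : [pchar K] =i pred0.

Lemma comp_eq_linear_right (A B C D : {poly K}) :
  (1 < size A)%N -> (1 < size B)%N -> size B = size D -> A \Po B = C \Po D ->
  exists l : {poly K}, size l = 2%N /\ B = l \Po D /\ C = A \Po l.
Proof.
move=> sA sB sBD eABCD; have sD : (1 < size D)%N by rewrite -sBD.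
have lD0 : lead_coef D != 0 by rewrite lead_coef_eq0 -size_poly_gt0; lia.
have lB0 : lead_coef B != 0 by rewrite lead_coef_eq0 -size_poly_gt0; lia.
set u := lead_coef B / lead_coef D.
have u0 : u != 0 by rewrite mulf_neq0 ?invr_eq0.
have eCD : C \Po D = (C \Po (u^-1 *: 'X)) \Po (u *: D).
  by rewrite -comp_polyA comp_polyZ comp_polyX scalerA mulVf // scale1r.
have sBuD : size B = size (u *: D) by rewrite size_scale.
have lBuD : lead_coef B = lead_coef (u *: D) by rewrite lead_coefZ divfK.
have /size1_polyC eBD :=
  size_sub_le1_comp_eq charK0 sA sB sBuD lBuD (etrans eABCD eCD).
set k := _`_0 in eBD; set l := u *: 'X + k%:P.
have eB : B = l \Po D.
  by rewrite comp_polyD comp_polyZ comp_polyX comp_polyC -eBD addrC subrK.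
exists l; split.
  by rewrite size_polyDl size_scale ?size_polyX // (leq_ltn_trans (size_polyC_leq1 k)).
by split=> //; apply: (comp_poly_inj sD); rewrite /= -eABCD {1}eB comp_polyA.
Qed.

End LinearRightFactor.

Lemma poly_iterS (K : fieldType) (F : {poly K}) n :
  poly_iter F n.+1 = poly_iter F n \Po F.
Proof.
elim: n => [|n IH]; first by rewrite /poly_iter /= comp_polyXr comp_polyX.
by rewrite /poly_iter /= -/(poly_iter F n) -comp_polyA -IH.
Qed.

Lemma size_poly_iter (K : fieldType) (F : {poly K}) n :
  (size (poly_iter F n)).-1 = ((size F).-1 ^ n)%N.
Proof.
elim: n => [|n IH]; first by rewrite /poly_iter /= size_polyX.
by rewrite /poly_iter /= size_comp_poly -/(poly_iter F n) IH expnS.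
Qed.

Lemma size_poly_iter_gt1 (K : fieldType) (F : {poly K}) n :
  (1 < size F)%N -> (1 < size (poly_iter F n))%N.
Proof.
move=> sF; have : (0 < (size (poly_iter F n)).-1)%N.
  by rewrite size_poly_iter expn_gt0; apply/orP; left; lia.
lia.
Qed.

Theorem lemma3p1 (K : fieldType) (charK0 : [pchar K] =i pred0)
  (F G H E Et a b c at_ bt ct : {poly K}) (t : nat)
  (hF : (1 < size F)%N) (hG : (1 < size G)%N) (hH : (1 < size H)%N)
  (hE : (1 < size E)%N) (hEt : (1 < size Et)%N)
  (ha : size a = 2%N) (hb : size b = 2%N) (hc : size c = 2%N)
  (hat : size at_ = 2%N) (hbt : size bt = 2%N) (hct : size ct = 2%N)
  (ht : (1 < t)%N)
  (eF : F = E \Po (H \Po a))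
  (eG : G = E \Po (c \Po (H \Po b)))
  (eFt : poly_iter F t = Et \Po (H \Po at_))
  (eGt : poly_iter G t = Et \Po (ct \Po (H \Po bt))) :
  exists e : {poly K}, size e = 2%N /\
    poly_iter F t.-1 = poly_iter G t.-1 \Po e.
Proof.
have t_eq : t = t.-1.+1 by lia.
set Fp := poly_iter F t.-1; set Gp := poly_iter G t.-1.
have sFp : (1 < size Fp)%N by apply: size_poly_iter_gt1.
have sGp : (1 < size Gp)%N by apply: size_poly_iter_gt1.
rewrite t_eq poly_iterS -/Fp eF comp_polyA in eFt.
rewrite t_eq poly_iterS -/Gp eG !comp_polyA in eGt.
have [l1 [sl1 [_ eEt]]] : exists l1 : {poly K}, size l1 = 2%N /\
    H \Po a = l1 \Po (H \Po at_) /\ Et = (Fp \Po E) \Po l1.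
  apply: (comp_eq_linear_right charK0 (size_comp_poly_gt1 sFp hE) _ _ eFt);
  by rewrite ?size_comp_poly2.
have [l2 [sl2 [_ eGpEc]]] : exists l2 : {poly K}, size l2 = 2%N /\
    H \Po bt = l2 \Po (H \Po b) /\ Gp \Po (E \Po c) = (Et \Po ct) \Po l2.
  by apply: (comp_eq_linear_right charK0); rewrite ?size_comp_poly2 // !comp_polyA.
have [e [se [_ eFpGp]]] : exists e : {poly K}, size e = 2%N /\
    E \Po c = e \Po (((E \Po l1) \Po ct) \Po l2) /\ Fp = Gp \Po e.
  apply: (comp_eq_linear_right charK0); rewrite ?size_comp_poly2 //.
  by rewrite eGpEc eEt !comp_polyA.
by exists e.
Qed.
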